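(* If there exists a Heffter space with $v$ points and $r$ parallel classes (over some abelian group of order $2v+1$) which is a linear space, then every prime divisor of $2v+1$ divides $r-1$.
   Context: A half-set of an abelian group $G$ of odd order $2v+1\ge7$ is a subset $V\subseteq G\setminus\{0\}$ containing exactly one element of each pair $\{g,-g\}$, $g\ne0$. A Heffter system on $V$ with block size $k$ is a partition of $V$ into blocks of size $k$, each summing to $0$ in $G$. A Heffter space over $G$ is a partial linear space (any two distinct points in at most one block) with point set a half-set $V$ of $G$, together with a resolution (partition of its blocks into parallel classes, each partitioning $V$) in which every parallel class is a Heffter system on $V$. It is a linear space if any two distinct points lie in exactly one block. *)

From HB Require Import structures.
From mathcomp Require Import all_boot all_order all_algebra.
Set Implicit Arguments. Unset Strict Implicit. Unset Printing Implicit Defensive.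
Import GRing.Theory.
Local Open Scope ring_scope.

Definition half_set (G : finZmodType) (V : {set G}) : Prop :=
  (0 \notin V) /\ (forall g : G, g != 0 -> ((g \in V) (+) (- g \in V)) = true).

Definition heffter_system (G : finZmodType) (V : {set G}) (k : nat)
    (S : {set {set G}}) : Prop :=
  partition S V /\
  (forall B, B \in S -> #|B| = k /\ \sum_(x in B) x = 0).

Definition blocks (G : finZmodType) (r : nat) (P : 'I_r -> {set {set G}})
  : {set {set G}} := \bigcup_(i < r) P i.

Definition heffter_space (G : finZmodType) (V : {set G}) (k r : nat)
    (P : 'I_r -> {set {set G}}) : Prop :=
  [/\ half_set V,
      (forall i j : 'I_r, i != j -> [disjoint P i & P j]),
      (forall i : 'I_r, heffter_system V k (P i)) &
      (forall x y : G, x \in V -> y \in V -> x != y ->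
         forall B1 B2, B1 \in blocks P -> B2 \in blocks P ->
           x \in B1 -> y \in B1 -> x \in B2 -> y \in B2 -> B1 = B2)].

Definition is_linear_space (G : finZmodType) (V : {set G}) (r : nat)
    (P : 'I_r -> {set {set G}}) : Prop :=
  forall x y : G, x \in V -> y \in V -> x != y ->
    exists! B, B \in blocks P /\ x \in B /\ y \in B.

(** Fix a point [x].  In every parallel class exactly one block contains [x]; by
    linearity and the partial-linear-space axiom these [r] blocks, with [x] removed,
    partition [V \ x].  Each block sums to [0], so [sum V = x - r x] for every point
    [x].  Comparing two points [x], [y] and using that [x - y] or [y - x] is a point
    forces [sum V = 0], whence [(r - 1) x = 0] on the half-set and so on all of [G].
    An element of order [p] (Cauchy) then gives [p | r - 1]. *)

From HB Require Import structures.
From mathcomp Require Import all_boot all_order all_algebra all_fingroup all_solvable.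
From mathcomp Require Import zify.
Set Implicit Arguments. Unset Strict Implicit. Unset Printing Implicit Defensive.
Import GRing.Theory.
Local Open Scope ring_scope.

Section HalfSet.

Variables (G : finZmodType) (V : {set G}).
Hypothesis hV : half_set V.

Lemma half_setN g : g != 0 -> (- g \in V) = (g \notin V).
Proof. by case: hV => _ /[apply]; case: (g \in V); case: (- g \in V). Qed.

Lemma half_set_memVN g : g != 0 -> (g \in V) || (- g \in V).
Proof. by move=> /half_setN ->; rewrite orbN. Qed.

Lemma card_half_set : #|G| = (#|V|).*2.+1.
Proof.
have [V0 _] := hV.
have disjVN : V :&: [set - x | x in V] = set0.
  apply/setP => g; rewrite !inE; apply/andP => -[gV /imsetP[x xV gE]].
  have gnz : g != 0 by apply: contraNneq V0 => <-.
  by move: xV; rewrite -[x]opprK -gE half_setN // gV.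
have VUNV : V :|: [set - x | x in V] = ~: [set 0].
  apply/setP => g; rewrite !inE; apply/idP/idP.
    by case/orP => [gV | /imsetP[x xV ->]];
      [apply: contraNneq V0 => <- | rewrite oppr_eq0; apply: contraNneq V0 => <-].
  move/half_set_memVN/orP => [-> // | NgV]; apply/orP; right.
  by apply/imsetP; exists (- g); rewrite ?opprK.
rewrite -(cardsC [set 0]) -VUNV cardsU disjVN cards0 subn0 cards1.
by rewrite card_imset; [rewrite addnn | exact: oppr_inj].
Qed.

Lemma half_set_mulrn_const n c :
  (1 < #|V|)%N -> {in V, forall x, x *+ n = c} -> forall z : G, z *+ n = 0.
Proof.
move=> /card_gt1P[x [y [xV yV xy]]] constV.
have dnz : x - y != 0 by rewrite subr_eq0.
have c0 : c = 0.
  have d0 : (x - y) *+ n = 0 by rewrite mulrnBl !constV ?subrr.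
  case/orP: (half_set_memVN dnz) => dV; first by rewrite -(constV _ dV).
  by rewrite -(constV _ dV) mulNrn d0 oppr0.
move=> z; have [-> | znz] := eqVneq z 0; first exact: mul0rn.
case/orP: (half_set_memVN znz) => zV; first by rewrite constV.
by apply: oppr_inj; rewrite -mulNrn constV // oppr0.
Qed.

End HalfSet.

Section ParallelClassesThroughPoint.

Variables (G : finZmodType) (V : {set G}) (k r : nat) (P : 'I_r -> {set {set G}}).
Hypothesis hsp : heffter_space V k P.
Variables (x : G) (xV : x \in V).

Let B i := pblock (P i) x.

Let partitionP i : partition (P i) V.
Proof. by case: hsp => _ _ /(_ i) []. Qed.

Lemma pblock_heffter_mem i : B i \in P i.
Proof. by apply: pblock_mem; case/and3P: (partitionP i) => /eqP ->. Qed.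

Lemma mem_pblock_heffter i : x \in B i.
Proof. by rewrite mem_pblock; case/and3P: (partitionP i) => /eqP ->. Qed.

Lemma pblock_heffter_sub i : B i \subset V.
Proof.
case/and3P: (partitionP i) => /eqP <- _ _.
by apply/subsetP => y yB; apply/bigcupP; exists (B i); rewrite ?pblock_heffter_mem.
Qed.

Lemma sum_pblock_setD1 i : \sum_(y in B i :\ x) y = - x.
Proof.
have [_ _ /(_ i) [_ /(_ _ (pblock_heffter_mem i)) [_ sumB0]] _] := hsp.
move: sumB0; rewrite (big_setD1 x (mem_pblock_heffter i)) /= => /eqP.
by rewrite addrC addr_eq0 => /eqP.
Qed.

Lemma pblock_setD1_disjoint i j : i != j -> [disjoint B i :\ x & B j :\ x].
Proof.
move=> ij; have [_ disjP _ partial] := hsp.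
apply/pred0P => y /=; apply/negP => /andP[].
rewrite !inE => /andP[yx yBi] /andP[_ yBj].
have blockP l : B l \in blocks P by apply/bigcupP; exists l; rewrite ?pblock_heffter_mem.
have Bij : B i = B j.
  apply: (partial x y) => //; rewrite ?mem_pblock_heffter ?(eq_sym x) //.
  exact: subsetP (pblock_heffter_sub i) y yBi.
have /pred0P/(_ (B i)) := disjP i j ij.
by rewrite /= {2}Bij !pblock_heffter_mem.
Qed.

Hypothesis lin : is_linear_space V P.

Lemma bigcup_pblock_setD1 : \bigcup_i (B i :\ x) = V :\ x.
Proof.
apply/setP => y; apply/bigcupP/idP.
  case=> i _; rewrite !inE => /andP[-> yB] /=.
  exact: subsetP (pblock_heffter_sub i) y yB.
rewrite !inE => /andP[yx yV].
have xy : x != y by rewrite eq_sym.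
have [C [[/bigcupP[i _ CP] [xC yC]] _]] := lin xV yV xy.
exists i => //; rewrite !inE yx /=.
have /and3P[_ trivP _] := partitionP i.
by rewrite /B (def_pblock trivP CP xC).
Qed.

Lemma sum_heffter_linear_space : \sum_(y in V) y = x - x *+ r.
Proof.
rewrite (big_setD1 x xV) /= -bigcup_pblock_setD1.
rewrite partition_disjoint_bigcup; last exact: pblock_setD1_disjoint.
under eq_bigr do rewrite sum_pblock_setD1.
by rewrite sumr_const card_ord mulNrn.
Qed.

End ParallelClassesThroughPoint.

Lemma prime_dvd_of_mulrn_eq0 (G : finZmodType) (n p : nat) :
  prime p -> (p %| #|G|)%N -> (forall z : G, z *+ n = 0) -> (p %| n)%N.
Proof.
move=> pp pG nG0.
have [z _ oz] := @Cauchy _ p [set: G] pp ltac:(by rewrite cardsT).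
by rewrite -oz order_dvdn FinRing.Theory.zmodXgE nG0.
Qed.

Theorem corollary2p3 (G : finZmodType) (v r : nat) :
  #|G| = (2 * v + 1)%N -> (7 <= 2 * v + 1)%N ->
  (exists (V : {set G}) (k : nat) (P : 'I_r -> {set {set G}}),
      heffter_space V k P /\ is_linear_space V P) ->
  forall p : nat, prime p -> (p %| 2 * v + 1)%N -> (p %| r - 1)%N.
Proof.
move=> cardG le7 [V [k [P [hsp lin]]]] p pp pdv.
case: r => [|r] in P hsp lin *; first by rewrite dvdn0.
have [hV _ _ _] := hsp.
have V2 : (1 < #|V|)%N by move: cardG; rewrite (card_half_set hV); lia.
apply: (prime_dvd_of_mulrn_eq0 (G := G)) => //; first by rewrite cardG.
apply: (half_set_mulrn_const hV V2 (c := - \sum_(y in V) y)) => x xV.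
by rewrite (sum_heffter_linear_space hsp xV lin) opprB mulrSr addrK subSS subn0.
Qed.
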